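(* Let $\mathbf U$ be a real $3\times 3$ positive-definite symmetric matrix. Let $\hat{\mathbf e}_1\in\mathbb R^3$ with $|\hat{\mathbf e}_1|=1$, define $\hat{\mathbf U}=(-\mathbf I+2\hat{\mathbf e}_1\otimes\hat{\mathbf e}_1)\mathbf U(-\mathbf I+2\hat{\mathbf e}_1\otimes\hat{\mathbf e}_1)$ and suppose $\hat{\mathbf U}\neq\mathbf U$. Then there exists a second unit vector $\hat{\mathbf e}_2$, not parallel to $\hat{\mathbf e}_1$, satisfying $\hat{\mathbf U}=(-\mathbf I+2\hat{\mathbf e}_2\otimes\hat{\mathbf e}_2)\mathbf U(-\mathbf I+2\hat{\mathbf e}_2\otimes\hat{\mathbf e}_2)$ if and only if $\hat{\mathbf e}_1$ is perpendicular to an eigenvector of $\mathbf U$. In the case that $\hat{\mathbf e}_1$ is perpendicular to an eigenvector of $\mathbf U$, such $\hat{\mathbf e}_2$ is unique up to sign and is perpendicular to both $\hat{\mathbf e}_1$ and that eigenvector. Moreover, suppose $\hat{\mathbf e}_1$ is perpendicular to an eigenvector $\mathbf v$ of $\mathbf U$ with $|\mathbf v|=1$, and put $\hat{\mathbf e}_2=\mathbf v\times\hat{\mathbf e}_1$. Then the two solutions $\mathbf a_C^1\otimes\mathbf n_C^1$, $\mathbf a_C^2\otimes\mathbf n_C^2$ (dyads $\mathbf a\otimes\mathbf n$, together with some $\hat{\mathbf R}\in\mathrm{SO}(3)$) of the equation $\hat{\mathbf R}\hat{\mathbf U}-\mathbf U=\mathbf a\otimes\mathbf n$ can be written $$\mathbf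 n_C^1=\hat{\mathbf e}_1,\quad \mathbf a_C^1=\xi\,\mathbf U\hat{\mathbf e}_2,\quad \xi=2\frac{\hat{\mathbf e}_2\cdot\mathbf U^{-2}\hat{\mathbf e}_1}{\hat{\mathbf e}_1\cdot\mathbf U^{-2}\hat{\mathbf e}_1},$$ $$\mathbf n_C^2=\hat{\mathbf e}_2,\quad \mathbf a_C^2=\eta\,\mathbf U\hat{\mathbf e}_1,\quad \eta=-2\frac{\hat{\mathbf e}_2\cdot\mathbf U^{2}\hat{\mathbf e}_1}{\hat{\mathbf e}_1\cdot\mathbf U^{2}\hat{\mathbf e}_1}.$$
   Context: For vectors $\mathbf a,\mathbf n\in\mathbb R^3$, $\mathbf a\otimes\mathbf n$ denotes the $3\times3$ matrix with $(\mathbf a\otimes\mathbf n)\mathbf x=(\mathbf n\cdot\mathbf x)\mathbf a$. $\mathrm{SO}(3)$ is the group of rotations. Solutions of $\hat{\mathbf R}\hat{\mathbf U}-\mathbf U=\mathbf a\otimes\mathbf n$ are counted as distinct only via the dyad $\mathbf a\otimes\mathbf n$ (rescaling $\mathbf a\to\rho\mathbf a$, $\mathbf n\to\mathbf n/\rho$ does not give a new solution). *)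

From HB Require Import structures.
From mathcomp Require Import all_boot all_order all_algebra.
From mathcomp Require Import reals.
Set Implicit Arguments. Unset Strict Implicit. Unset Printing Implicit Defensive.
Import Order.TTheory GRing.Theory Num.Theory.
Local Open Scope ring_scope.

Definition dot (R : realType) (u v : 'cV[R]_3) : R := (u^T *m v) 0 0.

Definition dyad (R : realType) (a n : 'cV[R]_3) : 'M[R]_3 := a *m n^T.

Definition cross (R : realType) (u v : 'cV[R]_3) : 'cV[R]_3 :=
  \col_(i < 3)
    [:: u 1 0 * v 2 0 - u 2 0 * v 1 0;
        u 2 0 * v 0 0 - u 0 0 * v 2 0;
        u 0 0 * v 1 0 - u 1 0 * v 0 0]`_i.

Definition unit_vec (R : realType) (e : 'cV[R]_3) : Prop := dot e e = 1.

Definition parallel (R : realType) (u v : 'cV[R]_3) : Prop :=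
  exists c : R, u = c *: v.

Definition Qrot (R : realType) (e : 'cV[R]_3) : 'M[R]_3 :=
  - (1%:M) + 2 *: dyad e e.

Definition twinU (R : realType) (e : 'cV[R]_3) (U : 'M[R]_3) : 'M[R]_3 :=
  Qrot e *m U *m Qrot e.

Definition sym_mx (R : realType) (U : 'M[R]_3) : Prop := U^T = U.

Definition posdef (R : realType) (U : 'M[R]_3) : Prop :=
  forall x : 'cV[R]_3, x != 0 -> 0 < dot x (U *m x).

Definition eigenvector (R : realType) (U : 'M[R]_3) (v : 'cV[R]_3) : Prop :=
  v != 0 /\ exists lam : R, U *m v = lam *: v.

Definition SO3 (R : realType) (Q : 'M[R]_3) : Prop :=
  Q^T *m Q = 1%:M /\ \det Q = 1.

Definition twin_solution (R : realType) (U Uh D : 'M[R]_3) : Prop :=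
  exists (Rh : 'M[R]_3) (a n : 'cV[R]_3),
    SO3 Rh /\ D = dyad a n /\ Rh *m Uh - U = D.

From HB Require Import structures.
From mathcomp Require Import all_boot all_order all_algebra.
From mathcomp Require Import reals.
From mathcomp Require Import ring lra.
Import Order.TTheory GRing.Theory Num.Theory.
Local Open Scope ring_scope.

(* For a unit vector [e], [Qrot e] is the half-turn about [e], so
   [twinU e2 U = twinU e1 U] says that the rotation [Qrot e1 *m Qrot e2]
   commutes with [U]. The commutator of two half-turns is proportional to
   [e1 . e2]; if it were nonzero, [U] would commute with [e1 (x) e2 - e2 (x) e1],
   which makes [e1] an eigenvector of [U], i.e. [twinU e1 U = U]. Hence
   [e1 . e2 = 0], [Qrot e1 *m Qrot e2] is the half-turn about [e1 x e2], and it
   commutes with [U] iff [e1 x e2] is an eigenvector.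
   A dyad [a (x) n] solves the twin equation iff [(U + a (x) n)^T (U + a (x) n)
   = Uh^2] and [det (U + a (x) n) = det U]. In the frame [e1, v x e1, v] the
   matrices [Uh^2] and [U^2] differ only by the sign of one off-diagonal entry,
   and the resulting equations force [n] along [e1] or along [v x e1], each
   direction admitting exactly one solution. *)

Lemma sum_ord3 {R : realType} (F : 'I_3 -> R) : \sum_(i < 3) F i = F 0 + F 1 + F 2.
Proof.
rewrite !big_ord_recr big_ord0 /= add0r.
by congr (F _ + F _ + F _); apply/val_inj.
Qed.

Lemma cV3_ext {R : realType} (x y : 'cV[R]_3) :
  x 0 0 = y 0 0 -> x 1 0 = y 1 0 -> x 2 0 = y 2 0 -> x = y.
Proof.
move=> h0 h1 h2; apply/colP => -[[|[|[|//]]] Hi].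
- by rewrite (_ : Ordinal Hi = 0) //; apply/val_inj.
- by rewrite (_ : Ordinal Hi = 1) //; apply/val_inj.
- by rewrite (_ : Ordinal Hi = 2) //; apply/val_inj.
Qed.

Lemma dotE {R : realType} (u v : 'cV[R]_3) :
  dot u v = u 0 0 * v 0 0 + u 1 0 * v 1 0 + u 2 0 * v 2 0.
Proof. by rewrite /dot mxE sum_ord3 !mxE. Qed.

Ltac col_ring := apply: cV3_ext; rewrite ?dotE !mxE /=; ring.
Ltac coord_ring := rewrite ?dotE ?mxE /=; ring.

Section Vectors.
Context {R : realType}.
Implicit Types (u v w x y a b n e : 'cV[R]_3) (M N : 'M[R]_3).

Lemma dotC u v : dot u v = dot v u. Proof. coord_ring. Qed.
Lemma dotDl u v w : dot (u + v) w = dot u w + dot v w. Proof. coord_ring. Qed.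
Lemma dotDr u v w : dot w (u + v) = dot w u + dot w v. Proof. coord_ring. Qed.
Lemma dotZl k u v : dot (k *: u) v = k * dot u v. Proof. coord_ring. Qed.
Lemma dotZr k u v : dot u (k *: v) = k * dot u v. Proof. coord_ring. Qed.
Lemma dotNl u v : dot (- u) v = - dot u v. Proof. coord_ring. Qed.
Lemma dotNr u v : dot u (- v) = - dot u v. Proof. coord_ring. Qed.
Lemma dotBl u v w : dot (u - v) w = dot u w - dot v w. Proof. coord_ring. Qed.
Lemma dotBr u v w : dot w (u - v) = dot w u - dot w v. Proof. coord_ring. Qed.
Lemma dot0l u : dot 0 u = 0. Proof. coord_ring. Qed.
Lemma dot0r u : dot u 0 = 0. Proof. coord_ring. Qed.

Definition dot_lin :=
  (dotDl, dotDr, dotZl, dotZr, dotNl, dotNr, dotBl, dotBr, dot0l, dot0r).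

Lemma dot_trmx u M v : dot u (M *m v) = dot (M^T *m u) v.
Proof. by rewrite /dot trmx_mul trmxK mulmxA. Qed.

Lemma dot_sym {M} x y : M^T = M -> dot x (M *m y) = dot (M *m x) y.
Proof. by move=> hM; rewrite dot_trmx hM. Qed.

Lemma dot_ge0 u : 0 <= dot u u.
Proof. rewrite dotE; nra. Qed.

Lemma dot_eq0 u : dot u u = 0 -> u = 0.
Proof.
rewrite dotE => h.
have h0 : u 0 0 = 0 by nra.
have h1 : u 1 0 = 0 by nra.
have h2 : u 2 0 = 0 by nra.
by apply: cV3_ext; rewrite mxE.
Qed.

Lemma dot_gt0 u : u != 0 -> 0 < dot u u.
Proof.
by move=> u0; rewrite lt_def dot_ge0 andbT; apply: contra_neq u0; apply: dot_eq0.
Qed.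

Lemma unit_vec_neq0 {e} : unit_vec e -> e != 0.
Proof.
move=> he; apply/eqP => e0; move: he.
by rewrite /unit_vec e0 dot0l => /eqP; rewrite eq_sym oner_eq0.
Qed.

Lemma unit_vec_normalize {v} : v != 0 -> unit_vec ((Num.sqrt (dot v v))^-1 *: v).
Proof.
move=> v0; have hd := dot_gt0 _ v0.
rewrite /unit_vec dotZl dotZr mulrA -expr2 exprVn sqr_sqrtr ?ltW //.
by rewrite mulVf // gt_eqF.
Qed.

Lemma mulmx_cV_ext M N : (forall x, M *m x = N *m x) -> M = N.
Proof.
move=> h; apply/matrixP => i j.
have := congr1 (fun v : 'cV[R]_3 => v i 0) (h (delta_mx j 0)).
by rewrite -!colE !mxE.
Qed.

Lemma comm_trmx {M N} : M^T = M -> N *m M = M *m N -> N^T *m M = M *m N^T.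
Proof. by move=> hM h; rewrite -{1}hM -trmx_mul -h trmx_mul hM. Qed.

Lemma mul_dyad a n x : dyad a n *m x = dot n x *: a.
Proof. by rewrite /dyad -mulmxA [n^T *m x]mx11_scalar mul_mx_scalar. Qed.

Lemma dyadZl k a n : dyad (k *: a) n = k *: dyad a n.
Proof. by rewrite /dyad scalemxAl. Qed.

Lemma dyadZr k a n : dyad a (k *: n) = k *: dyad a n.
Proof. by rewrite /dyad linearZ /= scalemxAr. Qed.

Lemma trmx_dyad a n : (dyad a n)^T = dyad n a.
Proof. by rewrite /dyad trmx_mul trmxK. Qed.

Lemma det_mx33 M : \det M =
  M 0 0 * (M 1 1 * M 2 2 - M 1 2 * M 2 1)
  - M 0 1 * (M 1 0 * M 2 2 - M 1 2 * M 2 0)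
  + M 0 2 * (M 1 0 * M 2 1 - M 1 1 * M 2 0).
Proof.
rewrite (expand_det_row _ 0) sum_ord3 /cofactor.
rewrite !(expand_det_row _ 0) !big_ord_recr big_ord0 /= /cofactor.
rewrite !det_mx11 !big_ord0 !mxE /=.
(* Index [M] by [nat] so that the ordinals produced by the expansion compute. *)
pose f (i j : nat) := M (inord i) (inord j).
have -> : M = \matrix_(i, j) f i j by apply/matrixP => i j; rewrite mxE /f !inord_val.
rewrite !mxE /f; ring.
Qed.

Lemma det_1Ddyad a n : \det (1%:M + dyad a n) = 1 + dot n a.
Proof. by rewrite det_mx33 /dyad !mxE !big_ord1 !mxE dotE /=; ring. Qed.

Lemma dot_crossl a b : dot (cross a b) a = 0. Proof. coord_ring. Qed.
Lemma dot_crossr a b : dot (cross a b) b = 0. Proof. coord_ring. Qed.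

Lemma dot_cross_self a b :
  dot (cross a b) (cross a b) = dot a a * dot b b - dot a b ^+ 2.
Proof. coord_ring. Qed.

Lemma cross_cross a b c : cross a (cross b c) = dot a c *: b - dot a b *: c.
Proof. col_ring. Qed.

Section OrthonormalPair.
Context {a b : 'cV[R]_3}.
Hypotheses (ha : unit_vec a) (hb : unit_vec b) (hab : dot a b = 0).

Lemma unit_cross : unit_vec (cross a b).
Proof. by rewrite /unit_vec dot_cross_self ha hb hab; ring. Qed.

Lemma orthonormal_decomp x :
  x = dot a x *: a + dot b x *: b + dot (cross a b) x *: cross a b.
Proof.
have gen : dot (cross a b) (cross a b) *: x = dot (cross a b) x *: cross a b
    + dot a x *: (dot b b *: a - dot a b *: b)
    + dot b x *: (dot a a *: b - dot a b *: a) by col_ring.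
move: gen; rewrite unit_cross ha hb hab scale1r => {1}->; col_ring.
Qed.

Lemma orthonormal_mx_ext M N :
  M *m a = N *m a -> M *m b = N *m b -> M *m cross a b = N *m cross a b -> M = N.
Proof.
move=> h1 h2 h3; apply: mulmx_cV_ext => x.
by rewrite (orthonormal_decomp x) !mulmxDr -!scalemxAr h1 h2 h3.
Qed.

End OrthonormalPair.

Lemma Qrot_mul e x : Qrot e *m x = (2 * dot e x) *: e - x.
Proof.
by rewrite /Qrot mulmxDl mulNmx mul1mx -scalemxAl mul_dyad scalerA addrC.
Qed.

Lemma Qrot_invol e : unit_vec e -> Qrot e *m Qrot e = 1%:M.
Proof.
move=> he; apply: mulmx_cV_ext => x.
rewrite -mulmxA !Qrot_mul mul1mx !dot_lin he; col_ring.
Qed.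

Lemma trmx_Qrot e : (Qrot e)^T = Qrot e.
Proof. by rewrite /Qrot linearD linearN linearZ /= trmx1 trmx_dyad. Qed.

Lemma Qrot_fixed w x : Qrot w *m x = x -> x = dot w x *: w.
Proof.
rewrite Qrot_mul => h; have hi i := congr1 (fun y : 'cV[R]_3 => y i 0) h.
move: (hi 0) (hi 1) (hi 2); rewrite /= !mxE => h0 h1 h2.
by apply: cV3_ext; rewrite mxE; lra.
Qed.

Lemma Qrot_mul_orth a b : unit_vec a -> unit_vec b -> dot a b = 0 ->
  Qrot a *m Qrot b = Qrot (cross a b).
Proof.
move=> ha hb hab; apply: mulmx_cV_ext => y.
rewrite -mulmxA !Qrot_mul !dot_lin hab.
have Hy := orthonormal_decomp ha hb hab y.
set y1 := dot a y in Hy *; set y2 := dot b y in Hy *.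
set y3 := dot (cross a b) y in Hy *.
rewrite {-1}Hy {1}Hy; col_ring.
Qed.

Lemma Qrot_commutator a b :
  Qrot a *m Qrot b - Qrot b *m Qrot a = (4 * dot a b) *: (dyad a b - dyad b a).
Proof.
apply: mulmx_cV_ext => y.
rewrite mulmxBl -!mulmxA !Qrot_mul -scalemxAl mulmxBl !mul_dyad !dot_lin (dotC b a).
col_ring.
Qed.

End Vectors.

Section Twins.
Context {R : realType}.
Implicit Types (u v w x y a b n e : 'cV[R]_3) (U M : 'M[R]_3).

Lemma twinU_eq_comm {U e1 e2} : unit_vec e1 -> unit_vec e2 ->
  twinU e2 U = twinU e1 U <-> Qrot e1 *m Qrot e2 *m U = U *m (Qrot e1 *m Qrot e2).
Proof.
move=> he1 he2; rewrite /twinU; split => h.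
- have -> : Qrot e1 *m Qrot e2 *m U = Qrot e1 *m (Qrot e2 *m U *m Qrot e2) *m Qrot e2.
    by rewrite !mulmxA -(mulmxA _ (Qrot e2) (Qrot e2)) Qrot_invol // mulmx1.
  by rewrite h !mulmxA Qrot_invol // mul1mx.
- have -> : Qrot e2 *m U *m Qrot e2 = Qrot e1 *m (Qrot e1 *m Qrot e2 *m U) *m Qrot e2.
    by rewrite !mulmxA Qrot_invol // mul1mx.
  by rewrite h !mulmxA -(mulmxA _ (Qrot e2) (Qrot e2)) Qrot_invol // mulmx1.
Qed.

Lemma Qrot_comm_eigen {U v lam} : U^T = U -> U *m v = lam *: v ->
  Qrot v *m U = U *m Qrot v.
Proof.
move=> hU hv; apply: mulmx_cV_ext => x.
rewrite -!mulmxA !Qrot_mul mulmxBr -scalemxAr hv dot_sym // hv dotZl scalerA.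
by congr (_ *: _ - _); ring.
Qed.

Lemma twinU_eigen {U e lam} : U^T = U -> unit_vec e -> U *m e = lam *: e ->
  twinU e U = U.
Proof.
move=> hU he hUe.
by rewrite /twinU (Qrot_comm_eigen hU hUe) -mulmxA Qrot_invol // mulmx1.
Qed.

Section Twin.
Context {U : 'M[R]_3} {e1 : 'cV[R]_3}.
Hypotheses (hU : U^T = U) (he1 : unit_vec e1) (hUh : twinU e1 U <> U).

Lemma not_eigen_e1 lam : U *m e1 <> lam *: e1.
Proof. by move/(twinU_eigen hU he1). Qed.

Lemma twin_skew_comm {e2} : unit_vec e2 -> twinU e2 U = twinU e1 U ->
  dot e1 e2 != 0 -> forall x,
  dot e2 (U *m x) *: e1 - dot e1 (U *m x) *: e2 =
  dot e2 x *: (U *m e1) - dot e1 x *: (U *m e2).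
Proof.
move=> he2 /(twinU_eq_comm he1 he2) h12 c0 x.
have h21 := comm_trmx hU h12; rewrite trmx_mul !trmx_Qrot in h21.
have hC : (Qrot e1 *m Qrot e2 - Qrot e2 *m Qrot e1) *m U =
          U *m (Qrot e1 *m Qrot e2 - Qrot e2 *m Qrot e1).
  by rewrite mulmxBl mulmxBr h12 h21.
move: hC; rewrite Qrot_commutator -scalemxAl -scalemxAr => /scalemx_inj.
rewrite mulf_neq0 ?pnatr_eq0 // => /(_ isT) /(congr1 (mulmx^~ x)) /=.
by rewrite -!mulmxA !mulmxBl !mul_dyad mulmxBr -!scalemxAr.
Qed.

Lemma twin_orthogonal {e2} : unit_vec e2 -> ~ parallel e2 e1 ->
  twinU e2 U = twinU e1 U -> dot e1 e2 = 0.
Proof.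
move=> he2 hnp ht; set c := dot e1 e2.
have hc2 : 1 - c ^+ 2 != 0.
  apply/eqP => h; apply: hnp; exists c.
  apply/eqP; rewrite -subr_eq0; apply/eqP; apply: dot_eq0.
  rewrite !dot_lin he1 he2 (dotC e2 e1) -/c.
  by apply: (etrans _ h); ring.
apply/eqP; apply: contraT => hc.
have K := twin_skew_comm he2 ht hc.
have ha := K e1; have hb := K e2.
rewrite he1 he2 (dotC e2 e1) -/c in ha hb.
have hB : dot e1 (U *m e2) = dot e2 (U *m e1) by rewrite dot_sym // dotC.
have da := congr1 (dot e1) ha.
have db := congr1 (dot e2) hb.
rewrite !dot_lin ?he1 ?he2 ?hB ?(dotC e2 e1) -?/c in da db.
set A := dot e1 (U *m e1) in da ha.
set B := dot e2 (U *m e1) in da db ha hb.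
set C := dot e2 (U *m e2) in db hb.
rewrite hB -/B in ha hb.
have eB : B = c * A by lra.
have eC : C = A.
  have : c * (C - A) = 0 by lra.
  by move/eqP; rewrite mulf_eq0 (negbTE hc) /= subr_eq0 => /eqP.
have /not_eigen_e1 [] : U *m e1 = A *: e1.
  have hi (y z : 'cV[R]_3) i : y = z -> y i 0 = z i 0 by move->.
  move: (hi _ _ 0 ha) (hi _ _ 1 ha) (hi _ _ 2 ha)
        (hi _ _ 0 hb) (hi _ _ 1 hb) (hi _ _ 2 hb).
  rewrite !mxE eC eB => a0 a1 a2 b0 b1 b2.
  by apply: cV3_ext; rewrite !mxE; apply: (mulfI hc2); nra.
Qed.

(* [Qrot e1 *m Qrot e2] is the half-turn about [cross e1 e2], and [U] maps
   the axis of a half-turn it commutes with into that axis. *)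
Lemma twin_axis_eigen {e2} : unit_vec e2 -> dot e1 e2 = 0 ->
  twinU e2 U = twinU e1 U ->
  U *m cross e1 e2 = dot (cross e1 e2) (U *m cross e1 e2) *: cross e1 e2.
Proof.
move=> he2 h12 /(twinU_eq_comm he1 he2); rewrite Qrot_mul_orth // => hQ.
apply: Qrot_fixed; rewrite mulmxA hQ -mulmxA Qrot_mul unit_cross //.
by rewrite mulr1 scaler_nat mulr2n addrK.
Qed.

Lemma twin_offdiag_neq0 {e2 lam} : unit_vec e2 -> dot e1 e2 = 0 ->
  U *m cross e1 e2 = lam *: cross e1 e2 -> dot e1 (U *m e2) != 0.
Proof.
move=> he2 h12 hw; apply/eqP => hB.
apply: (@not_eigen_e1 (dot e1 (U *m e1))).
rewrite {1}(orthonormal_decomp he1 he2 h12 (U *m e1)).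
rewrite (dot_sym e2 e1 hU) (dotC (U *m e2)) hB.
by rewrite (dot_sym (cross e1 e2) e1 hU) hw dotZl dot_crossl mulr0 !scale0r !addr0.
Qed.

Lemma twin_eigenvector {e2} : unit_vec e2 -> ~ parallel e2 e1 ->
  twinU e2 U = twinU e1 U -> exists v, eigenvector U v /\ dot e1 v = 0.
Proof.
move=> he2 hnp ht; have h12 := twin_orthogonal he2 hnp ht.
exists (cross e1 e2); split; last by rewrite dotC dot_crossl.
split; first exact/unit_vec_neq0/unit_cross.
by eexists; apply: twin_axis_eigen.
Qed.

Lemma eigenvector_twin {v} : eigenvector U v -> dot e1 v = 0 ->
  exists e2, [/\ unit_vec e2, ~ parallel e2 e1 & twinU e2 U = twinU e1 U].
Proof.
move=> [v0 [lam hv]] h1v.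
set vn := (Num.sqrt (dot v v))^-1 *: v.
have hvn : unit_vec vn := unit_vec_normalize v0.
have h1vn : dot e1 vn = 0 by rewrite dotZr h1v mulr0.
have hUvn : U *m vn = lam *: vn by rewrite -scalemxAr hv !scalerA mulrC.
have h12 : dot e1 (cross vn e1) = 0 by rewrite dotC dot_crossr.
have he2 : unit_vec (cross vn e1) by apply: unit_cross; rewrite // dotC.
exists (cross vn e1); split => //.
- move=> [t ht]; have t0 : t = 0 by move: h12; rewrite ht dotZr he1 mulr1.
  by move: (unit_vec_neq0 he2); rewrite ht t0 scale0r eqxx.
- apply/(twinU_eq_comm he1 he2).
  have -> : Qrot e1 *m Qrot (cross vn e1) = Qrot vn.
    by rewrite Qrot_mul_orth // cross_cross he1 h1vn scale1r scale0r subr0.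
  exact: Qrot_comm_eigen hU hUvn.
Qed.

Lemma twin_perp {v e2} : eigenvector U v -> dot e1 v = 0 ->
  unit_vec e2 -> ~ parallel e2 e1 -> twinU e2 U = twinU e1 U ->
  dot e2 e1 = 0 /\ dot e2 v = 0.
Proof.
move=> [_ [mu hv]] h1v he2 hnp ht.
have h12 := twin_orthogonal he2 hnp ht.
split; first by rewrite dotC.
have hB := twin_offdiag_neq0 he2 h12 (twin_axis_eigen he2 h12 ht).
have : dot e1 (U *m v) = 0 by rewrite hv dotZr h1v mulr0.
rewrite {1}(orthonormal_decomp he1 he2 h12 v) !mulmxDr -!scalemxAr.
rewrite (twin_axis_eigen he2 h12 ht) !dot_lin h1v.
rewrite (dotC e1 (cross e1 e2)) dot_crossl !mulr0 mul0r add0r addr0.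
by move/eqP; rewrite mulf_eq0 (negbTE hB) orbF dotC => /eqP.
Qed.

Lemma twin_unique {v e2 e2'} : eigenvector U v -> dot e1 v = 0 ->
  unit_vec e2 -> ~ parallel e2 e1 -> twinU e2 U = twinU e1 U ->
  unit_vec e2' -> ~ parallel e2' e1 -> twinU e2' U = twinU e1 U ->
  e2' = e2 \/ e2' = - e2.
Proof.
move=> hv h1v he2 hnp ht he2' hnp' ht'.
have [h21 h2v] := twin_perp hv h1v he2 hnp ht.
have [h21' h2v'] := twin_perp hv h1v he2' hnp' ht'.
have h12 : dot e1 e2 = 0 by rewrite dotC.
have Hv := orthonormal_decomp he1 he2 h12 v.
rewrite h1v h2v !scale0r !add0r in Hv.
have hw0 : dot (cross e1 e2) v != 0.
  by apply/eqP => h0; case: hv => /eqP []; rewrite Hv h0 scale0r.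
have hw' : dot (cross e1 e2) e2' = 0.
  move: h2v'; rewrite Hv dotZr => /eqP; rewrite mulf_eq0 (negbTE hw0) /= dotC.
  by move/eqP.
have He := orthonormal_decomp he1 he2 h12 e2'.
rewrite hw' (dotC e1) h21' !scale0r add0r addr0 in He.
have : dot e2 e2' ^+ 2 = 1.
  by move: he2'; rewrite /unit_vec {1 2}He dotZl dotZr he2 mulr1 expr2.
move/eqP; rewrite sqrf_eq1 => /orP [] /eqP hk.
  by left; rewrite He hk scale1r.
by right; rewrite He hk scaleN1r.
Qed.

End Twin.
End Twins.

Section Rotations.
Context {R : realType}.
Implicit Types (a n x : 'cV[R]_3) (U M N : 'M[R]_3).

Lemma posdef_unitmx {U} : posdef U -> U \in unitmx.
Proof.
move=> hU; rewrite unitmxE unitfE; apply/negP => /det0P [z z0 hz].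
have zT0 : z^T != 0 by apply: contra z0 => /eqP h; rewrite -[z]trmxK h linear0.
by have := hU _ zT0; rewrite /dot trmxK mulmxA hz mul0mx mxE ltxx.
Qed.

Lemma det_add_dyad U a n : U \in unitmx ->
  \det (U + dyad a n) = \det U * (1 + dot n (invmx U *m a)).
Proof.
move=> hU; have -> : U + dyad a n = U *m (1%:M + dyad (invmx U *m a) n).
  by rewrite mulmxDr mulmx1 /dyad mulmxA mulKVmx.
by rewrite det_mulmx det_1Ddyad.
Qed.

Lemma rotation_factorP M N : N \in unitmx ->
  (exists Q, SO3 Q /\ Q *m N = M) <-> M^T *m M = N^T *m N /\ \det M = \det N.
Proof.
move=> hN; split.
- move=> [Q [[hQQ hQ] <-]]; split; last by rewrite det_mulmx hQ mul1r.
  by rewrite trmx_mul mulmxA -(mulmxA _ Q^T) hQQ mulmx1.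
- move=> [hMM hdet]; exists (M *m invmx N); split; last by rewrite mulmxKV.
  split; last by rewrite det_mulmx det_inv hdet mulfV // -unitfE -unitmxE.
  rewrite trmx_mul trmx_inv mulmxA -(mulmxA _ M^T) hMM.
  by rewrite mulmxA mulVmx ?unitmx_tr // mul1mx mulmxV.
Qed.

Lemma det_twinU U e : unit_vec e -> \det (twinU e U) = \det U.
Proof.
move=> he; rewrite /twinU !det_mulmx mulrC mulrA -det_mulmx Qrot_invol //.
by rewrite det1 mul1r.
Qed.

Lemma trmx_twinU U e : U^T = U -> (twinU e U)^T = twinU e U.
Proof. by move=> hU; rewrite /twinU !trmx_mul trmx_Qrot hU mulmxA. Qed.

Lemma gram_add_dyad U a n : U^T = U ->
  (U + dyad a n)^T *m (U + dyad a n) =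
  U *m U + dyad n (U *m a) + dyad (U *m a) n + dot a a *: dyad n n.
Proof.
move=> hU; apply: mulmx_cV_ext => x.
have -> : (U + dyad a n)^T = U + dyad n a by rewrite linearD /= hU trmx_dyad.
rewrite -!mulmxA !mulmxDl !mulmxDr -!scalemxAl !mul_dyad.
by rewrite -!scalemxAr mulmxA dot_sym // dotZr; col_ring.
Qed.

Lemma twin_solutionP {U e1} D : U^T = U -> posdef U -> unit_vec e1 ->
  twin_solution U (twinU e1 U) D <->
  exists a n, [/\ D = dyad a n,
    (U + D)^T *m (U + D) = twinU e1 U *m twinU e1 U
    & dot n (invmx U *m a) = 0].
Proof.
move=> hU hpd he1; have hUu := posdef_unitmx hpd.
have hUh : twinU e1 U \in unitmx by rewrite unitmxE det_twinU // -unitmxE.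
have hP := rotation_factorP (U + D) _ hUh; rewrite trmx_twinU // in hP.
split.
- move=> [Q [a [n [hQ [hD hQU]]]]]; exists a, n.
  have [] := hP.1 (ex_intro _ Q (conj hQ _)); first by rewrite -hQU addrC subrK.
  rewrite hD det_add_dyad // det_twinU // => hMM hdet; split => //.
  have : \det U * (1 + dot n (invmx U *m a)) = \det U * (1 + 0).
    by rewrite hdet addr0 mulr1.
  by move/(mulfI _)/addrI; apply; rewrite -unitfE -unitmxE.
- move=> [a [n [hD hMM hdt]]].
  have [Q [hQ hQU]] : exists Q, SO3 Q /\ Q *m twinU e1 U = U + D.
    by apply/hP; rewrite hD det_add_dyad // hdt addr0 mulr1 det_twinU // -hD.
  by exists Q, a, n; rewrite hQU addrC addKr.
Qed.

End Rotations.

Lemma rank_one_sym_cases {R : realType} (n1 n2 n3 b1 b2 b3 s q : R) : q != 0 ->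
  2 * n1 * b1 + s * n1 * n1 = 0 -> 2 * n2 * b2 + s * n2 * n2 = 0 ->
  n2 * b1 + n1 * b2 + s * n1 * n2 = - 2 * q ->
  n3 * b1 + n1 * b3 + s * n1 * n3 = 0 ->
  n3 * b2 + n2 * b3 + s * n2 * n3 = 0 ->
  (n2 = 0 /\ n3 = 0 /\ n1 * b2 = - 2 * q /\ b3 = 0) \/
  (n1 = 0 /\ n3 = 0 /\ n2 * b1 = - 2 * q /\ b3 = 0).
Proof.
move=> q0 e11 e22 e12 e13 e23.
have q2 : - 2 * q != 0 by rewrite mulf_neq0 // oppr_eq0 pnatr_eq0.
have [n1_0|n2_0] : n1 = 0 \/ n2 = 0.
  have [->|n1_0] := eqVneq n1 0; [by left | right].
  apply/eqP; apply: contraNT q0 => n2_0.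
  have f1 : 2 * b1 + s * n1 = 0 by apply: (mulfI n1_0); rewrite mulr0; lra.
  have f2 : 2 * b2 + s * n2 = 0 by apply: (mulfI n2_0); rewrite mulr0; lra.
  have : - 4 * q = n2 * (2 * b1 + s * n1) + n1 * (2 * b2 + s * n2)
                 - 2 * (n2 * b1 + n1 * b2 + s * n1 * n2 + 2 * q) by ring.
  by rewrite f1 f2 e12 => h; apply/eqP; lra.
- right; subst n1; have k1 : n2 * b1 = - 2 * q by lra.
  have b1_0 : b1 != 0 by apply: contraNneq q2 => b0; rewrite -k1 b0 mulr0.
  have n2_0 : n2 != 0 by apply: contraNneq q2 => n0; rewrite -k1 n0 mul0r.
  have n3_0 : n3 = 0 by apply: (mulIf b1_0); rewrite mul0r; lra.
  by subst n3; split=> //; split=> //; split=> //; apply: (mulfI n2_0); lra.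
- left; subst n2; have k2 : n1 * b2 = - 2 * q by lra.
  have b2_0 : b2 != 0 by apply: contraNneq q2 => b0; rewrite -k2 b0 mulr0.
  have n1_0 : n1 != 0 by apply: contraNneq q2 => n0; rewrite -k2 n0 mul0r.
  have n3_0 : n3 = 0 by apply: (mulIf b2_0); rewrite mul0r; lra.
  by subst n3; split=> //; split=> //; split=> //; apply: (mulfI n1_0); lra.
Qed.

Section Frame.
Context {R : realType} {U : 'M[R]_3} {e1 v : 'cV[R]_3} {lam : R}.
Hypotheses (hU : U^T = U) (hpd : posdef U) (he1 : unit_vec e1)
  (hv : unit_vec v) (hUv : U *m v = lam *: v) (h1v : dot e1 v = 0).
Implicit Types (x y a n : 'cV[R]_3) (M N : 'M[R]_3).

Local Notation e2 := (cross v e1).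
Local Notation Uh := (twinU e1 U).

Let h11 : dot e1 e1 = 1 := he1.
Let hvv : dot v v = 1 := hv.
Let hv1 : dot v e1 = 0. Proof. by rewrite dotC. Qed.
Let h21 : dot e2 e1 = 0. Proof. exact: dot_crossr. Qed.
Let h12 : dot e1 e2 = 0. Proof. by rewrite dotC h21. Qed.
Let h2v : dot e2 v = 0. Proof. exact: dot_crossl. Qed.
Let hv2 : dot v e2 = 0. Proof. by rewrite dotC h2v. Qed.
Let h22 : dot e2 e2 = 1 := unit_cross hv he1 hv1.
Let frame_dot := (h11, h22, hvv, h12, h21, h1v, hv1, h2v, hv2).

Let cross_e1e2 : cross e1 e2 = v.
Proof. by rewrite cross_cross h11 h1v scale1r scale0r subr0. Qed.

Let frame_decomp x : x = dot e1 x *: e1 + dot e2 x *: e2 + dot v x *: v.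
Proof. by rewrite {1}(orthonormal_decomp he1 h22 h12 x) cross_e1e2. Qed.

Let frame_mx_ext M N :
  M *m e1 = N *m e1 -> M *m e2 = N *m e2 -> M *m v = N *m v -> M = N.
Proof.
by move=> ? ? ?; apply: (orthonormal_mx_ext he1 h22 h12); rewrite ?cross_e1e2.
Qed.

(* In the frame [e1, e2, v], [U] is [[A, B, 0], [B, E, 0], [0, 0, lam]] and
   [U^2] is [[p, q, 0], [q, r, 0], [0, 0, lam^2]]. *)
Let A := dot e1 (U *m e1).
Let B := dot e2 (U *m e1).
Let E := dot e2 (U *m e2).

Let U_e1 : U *m e1 = A *: e1 + B *: e2.
Proof.
rewrite {1}(frame_decomp (U *m e1)) (dot_sym v e1 hU) hUv dotZl hv1.
by rewrite mulr0 scale0r addr0.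
Qed.

Let U_e2 : U *m e2 = B *: e1 + E *: e2.
Proof.
rewrite {1}(frame_decomp (U *m e2)) (dot_sym v e2 hU) hUv dotZl hv2.
by rewrite mulr0 scale0r addr0 (dot_sym e1 e2 hU) dotC.
Qed.

Let A_gt0 : 0 < A := hpd _ (unit_vec_neq0 he1).
Let E_gt0 : 0 < E := hpd _ (unit_vec_neq0 h22).

Let lam_neq0 : lam != 0.
Proof.
by have := hpd _ (unit_vec_neq0 hv); rewrite hUv dotZr hvv mulr1 => /lt0r_neq0.
Qed.

(* Positivity of [U] at [E e1 - B e2]. *)
Let minor_gt0 : 0 < A * E - B ^+ 2.
Proof.
set x := E *: e1 - B *: e2.
have x0 : x != 0.
  apply: contraTneq E_gt0 => /(congr1 (dot e1)).
  by rewrite /x !dot_lin h11 h12 mulr1 mulr0 subr0 => ->; rewrite ltxx.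
have := hpd _ x0; rewrite /x mulmxBr -!scalemxAr U_e1 U_e2 !dot_lin !frame_dot => h.
by rewrite -(pmulr_rgt0 _ E_gt0); nra.
Qed.

Hypothesis hUh : Uh <> U.

Let B_neq0 : B != 0.
Proof.
have hw : U *m cross e1 e2 = lam *: cross e1 e2 by rewrite cross_e1e2.
by have := twin_offdiag_neq0 hU he1 hUh h22 h12 hw; rewrite (dot_sym e1 e2 hU) dotC.
Qed.

Let p := A ^+ 2 + B ^+ 2.
Let q := B * (A + E).
Let r := B ^+ 2 + E ^+ 2.

Let U2_e1 : U *m (U *m e1) = p *: e1 + q *: e2.
Proof. rewrite U_e1 mulmxDr -!scalemxAr U_e1 U_e2 /p /q; col_ring. Qed.

Let U2_e2 : U *m (U *m e2) = q *: e1 + r *: e2.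
Proof. rewrite U_e2 mulmxDr -!scalemxAr U_e1 U_e2 /q /r; col_ring. Qed.

Let U2_v : U *m (U *m v) = lam ^+ 2 *: v.
Proof. by rewrite hUv -scalemxAr hUv scalerA expr2. Qed.

Let p_gt0 : 0 < p. Proof. by rewrite /p; have := A_gt0; nra. Qed.
Let r_gt0 : 0 < r. Proof. by rewrite /r; have := E_gt0; nra. Qed.
Let q_neq0 : q != 0.
Proof. by rewrite mulf_neq0 // gt_eqF // addr_gt0. Qed.

Let disc_neq0 : p * r - q ^+ 2 != 0.
Proof.
have -> : p * r - q ^+ 2 = (A * E - B ^+ 2) ^+ 2 by rewrite /p /q /r; ring.
by rewrite sqrf_eq0 gt_eqF.
Qed.

Let invmx_U2_e1 : invmx (U *m U) *m e1 =
  (r / (p * r - q ^+ 2)) *: e1 - (q / (p * r - q ^+ 2)) *: e2.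
Proof.
have hU2 : U *m U \in unitmx by rewrite unitmx_mul posdef_unitmx.
apply/esym/(canRL (mulKmx hU2)).
rewrite mulmxBr -!scalemxAr -!mulmxA U2_e1 U2_e2.
by apply: cV3_ext; rewrite !mxE /=; field.
Qed.

Lemma xi_val :
  2 * (dot e2 (invmx (U *m U) *m e1) / dot e1 (invmx (U *m U) *m e1)) = - 2 * q / r.
Proof.
rewrite invmx_U2_e1 !dot_lin !frame_dot.
by field; rewrite gt_eqF.
Qed.

Lemma eta_val :
  - 2 * (dot e2 ((U *m U) *m e1) / dot e1 ((U *m U) *m e1)) = - 2 * q / p.
Proof.
rewrite -mulmxA U2_e1 !dot_lin !frame_dot.
by field; rewrite gt_eqF.
Qed.

Let q2_neq0 : - 2 * q != 0.
Proof. by rewrite mulf_neq0 // oppr_eq0 pnatr_eq0. Qed.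

Let Qrot_e1 : Qrot e1 *m e1 = e1. Proof. rewrite Qrot_mul h11; col_ring. Qed.
Let Qrot_e2 : Qrot e1 *m e2 = - e2. Proof. rewrite Qrot_mul h12; col_ring. Qed.
Let Qrot_v : Qrot e1 *m v = - v. Proof. rewrite Qrot_mul h1v; col_ring. Qed.

Let twinU_sq : Uh *m Uh = Qrot e1 *m (U *m U) *m Qrot e1.
Proof.
by rewrite /twinU !mulmxA -(mulmxA _ (Qrot e1) (Qrot e1)) Qrot_invol // mulmx1.
Qed.

(* [Qrot e1] flips [e2] and [v], so it only changes the sign of [q]. *)
Let twin_gram_diff : Uh *m Uh - U *m U = (- 2 * q) *: (dyad e1 e2 + dyad e2 e1).
Proof.
apply: frame_mx_ext.
all: rewrite mulmxBl twinU_sq -scalemxAl (mulmxDl (dyad e1 e2)) !mul_dyad -!mulmxA.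
all: rewrite !frame_dot.
all: rewrite ?Qrot_e1 ?Qrot_e2 ?Qrot_v ?mulmxN ?U2_e1 ?U2_e2 ?U2_v.
all: rewrite ?mulmxN ?mulmxDr -?scalemxAr ?Qrot_e1 ?Qrot_e2 ?Qrot_v; col_ring.
Qed.

Let twin_gram_iff a n :
  (U + dyad a n)^T *m (U + dyad a n) = Uh *m Uh <->
  dyad n (U *m a) + dyad (U *m a) n + dot a a *: dyad n n =
  (- 2 * q) *: (dyad e1 e2 + dyad e2 e1).
Proof.
rewrite gram_add_dyad // -twin_gram_diff -!addrA.
by split=> [<-|->]; [rewrite [U *m U + _]addrC addrK | rewrite addrC subrK].
Qed.

Let D1 := dyad ((- 2 * q / r) *: (U *m e2)) e1.
Let D2 := dyad ((- 2 * q / p) *: (U *m e1)) e2.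

Lemma twin_solution_D1 : twin_solution U Uh D1.
Proof.
apply/(twin_solutionP _ hU hpd he1); exists ((- 2 * q / r) *: (U *m e2)), e1.
split => //; last first.
  by rewrite -scalemxAr mulKmx ?posdef_unitmx // dotZr h12 mulr0.
apply/twin_gram_iff; apply: mulmx_cV_ext => x.
rewrite -scalemxAr dotZl dotZr -(dot_sym e2 _ hU) U2_e2.
rewrite !mulmxDl -[in RHS]scalemxAl [in RHS]mulmxDl -scalemxAl !mul_dyad.
rewrite !dot_lin !frame_dot.
by apply: cV3_ext; rewrite !mxE /=; field; rewrite gt_eqF.
Qed.

Lemma twin_solution_D2 : twin_solution U Uh D2.
Proof.
apply/(twin_solutionP _ hU hpd he1); exists ((- 2 * q / p) *: (U *m e1)), e2.
split => //; last first.
  by rewrite -scalemxAr mulKmx ?posdef_unitmx // dotZr h21 mulr0.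
apply/twin_gram_iff; apply: mulmx_cV_ext => x.
rewrite -scalemxAr dotZl dotZr -(dot_sym e1 _ hU) U2_e1.
rewrite !mulmxDl -[in RHS]scalemxAl [in RHS]mulmxDl -scalemxAl !mul_dyad.
rewrite !dot_lin !frame_dot.
by apply: cV3_ext; rewrite !mxE /=; field; rewrite gt_eqF.
Qed.

Lemma twin_dyads_neq : D1 <> D2.
Proof.
move=> /(congr1 (fun M => dot e2 (M *m e1))).
rewrite /D1 /D2 !mul_dyad !frame_dot scale1r scale0r dot0r !dotZr.
apply/eqP; rewrite mulf_neq0 ?(gt_eqF E_gt0) // mulf_neq0 // invr_eq0.
by rewrite (gt_eqF r_gt0).
Qed.

Let invmx_U a : a = U *m (invmx U *m a).
Proof. by rewrite mulKVmx ?posdef_unitmx. Qed.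

Let dot_U2 x y : dot x (U *m (U *m y)) = dot (U *m (U *m x)) y.
Proof. by rewrite !(dot_sym _ _ hU). Qed.

Let solution_along_e1 a n : dot n (invmx U *m a) = 0 -> n = dot e1 n *: e1 ->
  dot e1 n * dot e2 (U *m a) = - 2 * q -> dot v (U *m a) = 0 -> dyad a n = D1.
Proof.
set g := invmx U *m a => hg hn hb2 hb3.
have n1 : dot e1 n != 0 by apply: contraNneq q2_neq0 => h; rewrite -hb2 h mul0r.
have g1 : dot e1 g = 0.
  by apply/eqP; move: hg; rewrite hn dotZl => /eqP; rewrite mulf_eq0 (negbTE n1).
have g3 : dot v g = 0.
  apply/eqP; move: hb3; rewrite {1}(invmx_U a) dot_U2 U2_v dotZl => /eqP.
  by rewrite mulf_eq0 expf_eq0 (negbTE lam_neq0) andbF.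
rewrite {1}(invmx_U a) dot_U2 U2_e2 !dot_lin -/g g1 mulr0 add0r in hb2.
rewrite /D1 hn (invmx_U a) -/g (frame_decomp g) g1 g3 !scale0r add0r addr0.
rewrite -scalemxAr dyadZl dyadZr scalerA dyadZl -hb2.
by congr (_ *: _); field; rewrite gt_eqF.
Qed.

Let solution_along_e2 a n : dot n (invmx U *m a) = 0 -> n = dot e2 n *: e2 ->
  dot e2 n * dot e1 (U *m a) = - 2 * q -> dot v (U *m a) = 0 -> dyad a n = D2.
Proof.
set g := invmx U *m a => hg hn hb1 hb3.
have n2 : dot e2 n != 0 by apply: contraNneq q2_neq0 => h; rewrite -hb1 h mul0r.
have g2 : dot e2 g = 0.
  by apply/eqP; move: hg; rewrite hn dotZl => /eqP; rewrite mulf_eq0 (negbTE n2).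
have g3 : dot v g = 0.
  apply/eqP; move: hb3; rewrite {1}(invmx_U a) dot_U2 U2_v dotZl => /eqP.
  by rewrite mulf_eq0 expf_eq0 (negbTE lam_neq0) andbF.
rewrite {1}(invmx_U a) dot_U2 U2_e1 !dot_lin -/g g2 mulr0 addr0 in hb1.
rewrite /D2 hn (invmx_U a) -/g (frame_decomp g) g2 g3 !scale0r addr0 addr0.
rewrite -scalemxAr dyadZl dyadZr scalerA dyadZl -hb1.
by congr (_ *: _); field; rewrite gt_eqF.
Qed.

Lemma twin_solutionE D : twin_solution U Uh D <-> D = D1 \/ D = D2.
Proof.
split; last by case=> ->; [exact: twin_solution_D1 | exact: twin_solution_D2].
move/(twin_solutionP _ hU hpd he1) => [a [n [-> /twin_gram_iff hX hdt]]].
have coord x y : dot x n * dot (U *m a) y + dot x (U *m a) * dot n y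
    + dot a a * (dot x n * dot n y)
    = - 2 * q * (dot x e1 * dot e2 y + dot x e2 * dot e1 y).
  have := congr1 (fun M => dot x (M *m y)) hX.
  rewrite /= !mulmxDl -!scalemxAl mulmxDl !mul_dyad !dot_lin; lra.
have e11 := coord e1 e1; have e22 := coord e2 e2; have e12 := coord e1 e2.
have e1v := coord e1 v; have e2v := coord e2 v.
rewrite !frame_dot !(dotC n) !(dotC (U *m a)) in e11 e22 e12 e1v e2v.
have [[n2 [n3 [k2 k3]]] | [n1 [n3 [k1 k3]]]] :=
  rank_one_sym_cases (dot e1 n) (dot e2 n) (dot v n) (dot e1 (U *m a))
    (dot e2 (U *m a)) (dot v (U *m a)) (dot a a) q q_neq0
    ltac:(lra) ltac:(lra) ltac:(lra) ltac:(lra) ltac:(lra).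
- left; apply: solution_along_e1 => //.
  by rewrite {1}(frame_decomp n) n2 n3 !scale0r !addr0.
- right; apply: solution_along_e2 => //.
  by rewrite {1}(frame_decomp n) n1 n3 !scale0r add0r addr0.
Qed.

End Frame.

Theorem proposition1 (R : realType) (U : 'M[R]_3) (e1 : 'cV[R]_3) :
  sym_mx U -> posdef U -> unit_vec e1 -> twinU e1 U <> U ->
  [/\ (exists e2 : 'cV[R]_3,
         [/\ unit_vec e2, ~ parallel e2 e1 & twinU e2 U = twinU e1 U])
      <-> (exists v : 'cV[R]_3, eigenvector U v /\ dot e1 v = 0),
      (forall v : 'cV[R]_3, eigenvector U v -> dot e1 v = 0 ->
         forall e2 : 'cV[R]_3,
           unit_vec e2 -> ~ parallel e2 e1 -> twinU e2 U = twinU e1 U ->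
           [/\ dot e2 e1 = 0, dot e2 v = 0 &
               forall e2' : 'cV[R]_3,
                 unit_vec e2' -> ~ parallel e2' e1 -> twinU e2' U = twinU e1 U ->
                 e2' = e2 \/ e2' = - e2])
    & (forall v : 'cV[R]_3, eigenvector U v -> unit_vec v -> dot e1 v = 0 ->
         let e2 := cross v e1 in
         let xi := 2 * (dot e2 (invmx (U *m U) *m e1)
                        / dot e1 (invmx (U *m U) *m e1)) in
         let eta := - 2 * (dot e2 ((U *m U) *m e1) / dot e1 ((U *m U) *m e1)) in
         let D1 := dyad (xi *: (U *m e2)) e1 in
         let D2 := dyad (eta *: (U *m e1)) e2 in
         D1 <> D2 /\
         forall D : 'M[R]_3,
           twin_solution U (twinU e1 U) D <-> (D = D1 \/ D = D2))].
Proof.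
move=> hU hpd he1 hUh; split.
- split=> [[e2 [he2 hnp ht]] | [v [hv h1v]]].
    exact (twin_eigenvector hU he1 hUh he2 hnp ht).
  exact (eigenvector_twin hU he1 hv h1v).
- move=> v hv h1v e2 he2 hnp ht.
  have [h21 h2v] := twin_perp hU he1 hUh hv h1v he2 hnp ht.
  split=> // e2' he2' hnp' ht'.
  exact (twin_unique hU he1 hUh hv h1v he2 hnp ht he2' hnp' ht').
- move=> v [_ [lam hUv]] hv h1v /=.
  rewrite (xi_val hU hpd he1 hv hUv h1v) (eta_val hU hpd he1 hv hUv h1v).
  split; first exact (twin_dyads_neq hU hpd he1 hv hUv h1v hUh).
  exact (twin_solutionE hU hpd he1 hv hUv h1v hUh).
Qed.
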